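(* Let $g$ be a connected graph and $S$ a minimal separator of $g$ that is a clique of $g$. Let $c_1,\dots,c_k$ be the connected components of $g\setminus S$ and $\mathcal{C}(S)=\{g_{|V(c_i)\cup N_g(V(c_i))}: 1\le i\le k\}$. For any two distinct graphs $d_1,d_2\in\mathcal{C}(S)$, the sets of minimal separators of $d_1$ and of $d_2$ are disjoint.
   Context: Graphs are finite, simple and undirected. $g_{|U}$ is the subgraph induced by $U$, $g\setminus S=g_{|V(g)\setminus S}$, and $N_g(U)=\bigcup_{v\in U}N_g(v)\setminus U$. For nodes $u,v$, a set $S\subseteq V(g)$ is a $(u,v)$-separator if $u,v$ lie in distinct connected components of $g\setminus S$; it is a minimal $(u,v)$-separator if no proper subset is one; $S$ is a minimal separator if it is a minimal $(u,v)$-separator for some $u,v$. *)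

(* A finite simple graph g is a finType T of vertices with a
   symmetric irreflexive edge relation e. Induced subgraphs g_{|U} are
   represented by their vertex set U : {set T}. *)
From mathcomp Require Import all_boot.
Set Implicit Arguments. Unset Strict Implicit. Unset Printing Implicit Defensive.

Section Graphs.
Variables (T : finType) (e : rel T).

Definition induced_rel (W : {set T}) : rel T :=
  [rel x y | [&& x \in W, y \in W & e x y]].

Definition conn_in (W : {set T}) (u v : T) : bool :=
  [&& u \in W, v \in W & connect (induced_rel W) u v].

Definition connected_in (U : {set T}) : Prop :=
  forall u v, u \in U -> v \in U -> conn_in U u v.

Definition separator (U S : {set T}) (u v : T) : Prop :=
  [/\ S \subset U, u \in U :\: S, v \in U :\: S & ~~ conn_in (U :\: S) u v].

Definition min_separator_uv (U S : {set T}) (u v : T) : Prop :=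
  separator U S u v /\ (forall S' : {set T}, S' \proper S -> ~ separator U S' u v).

Definition min_separator (U S : {set T}) : Prop :=
  exists u v, min_separator_uv U S u v.

Definition is_clique (S : {set T}) : Prop :=
  forall x y, x \in S -> y \in S -> x != y -> e x y.

Definition nbhd (U : {set T}) : {set T} :=
  [set y | [exists x in U, e x y]] :\: U.

Definition component (S : {set T}) (x : T) : {set T} :=
  [set y | conn_in (~: S) x y].

Definition closed_comp (S : {set T}) (x : T) : {set T} :=
  component S x :|: nbhd (component S x).

End Graphs.

From mathcomp Require Import all_boot.
Set Implicit Arguments. Unset Strict Implicit. Unset Printing Implicit Defensive.

(* Let K1 and K2 be the components of g \ S underlying d1 and d2.  Since
   N(K2) lies in S, the graph d2 does not meet K1, so neither does any
   separator X of d2.  But K1 is connected and every vertex of d1 outside K1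
   has a neighbour in K1, so d1 \ X is connected whenever X avoids K1: X
   cannot separate d1. *)

Lemma connect_sub_in (T : finType) (r r' : rel T) (P : {pred T}) x y :
  (forall a b, a \in P -> r a b -> (b \in P) && r' a b) ->
  x \in P -> connect r x y -> connect r' x y.
Proof.
move=> rr' + /connectP[p]; elim: p x => [|z p IHp] x Px /=; first by move=> _ ->.
case/andP=> rxz rp ly; case/andP: (rr' _ _ Px rxz) => Pz r'xz.
exact: connect_trans (connect1 r'xz) (IHp z Pz rp ly).
Qed.

Section InducedSubgraphs.
Variables (T : finType) (e : rel T).

Lemma induced_rel_sym (W : {set T}) : symmetric e -> symmetric (induced_rel e W).
Proof. by move=> e_sym x y; rewrite /induced_rel /= e_sym andbCA. Qed.

Lemma connect_induced_sub (W1 W2 : {set T}) x y :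
  W1 \subset W2 -> connect (induced_rel e W1) x y -> connect (induced_rel e W2) x y.
Proof.
move=> /subsetP sW; apply: connect_sub => a b /and3P[aW bW eab].
by apply: connect1; rewrite /induced_rel /= !sW.
Qed.

End InducedSubgraphs.

Section Components.
Variables (T : finType) (e : rel T) (S : {set T}).
Hypothesis e_sym : symmetric e.

Lemma mem_component_self x : x \notin S -> x \in component e S x.
Proof. by move=> xS; rewrite !inE /conn_in !inE xS connect0. Qed.

Lemma component_base_notin x y : y \in component e S x -> x \notin S.
Proof. by rewrite inE => /and3P[]; rewrite inE. Qed.

Lemma component_notin x y : y \in component e S x -> y \notin S.
Proof. by rewrite !inE => /and3P[_]; rewrite inE. Qed.

Lemma component_eq x y : y \in component e S x -> component e S y = component e S x.
Proof.
rewrite inE => /and3P[xS yS cxy]; apply/setP => w; rewrite !inE /conn_in xS yS.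
have csym := sym_connect_sym (induced_rel_sym (~: S) e_sym).
by rewrite (same_connect csym cxy).
Qed.

Lemma component_edge x a b :
  a \in component e S x -> b \notin S -> e a b -> b \in component e S x.
Proof.
move=> aK bS eab; have aS := component_notin aK.
move: aK; rewrite !inE /conn_in !inE bS => /and3P[-> _ cxa] /=.
by apply: connect_trans cxa (connect1 _); rewrite /induced_rel /= !inE aS bS.
Qed.

Lemma connect_component x u :
  u \in component e S x -> connect (induced_rel e (component e S x)) x u.
Proof.
move=> uK; have xK := mem_component_self (component_base_notin uK).
move: uK; rewrite inE => /and3P[_ _]; apply: (connect_sub_in _ xK).
move=> a b aK /and3P[_]; rewrite inE => bS eab.
by have bK := component_edge aK bS eab; rewrite bK /induced_rel /= aK bK.
Qed.

Lemma component_meet_closed_comp x1 x2 y :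
  y \in component e S x1 -> y \in closed_comp e S x2 ->
  component e S x1 = component e S x2.
Proof.
move=> yK1; rewrite in_setU => /orP[yK2|].
  by rewrite -(component_eq yK1) (component_eq yK2).
rewrite in_setD inE => /andP[yK2 /existsP[z /andP[zK2 ezy]]].
by rewrite (component_edge zK2 (component_notin yK1) ezy) in yK2.
Qed.

Lemma connected_closed_compD x (X : {set T}) :
  x \notin S -> [disjoint X & component e S x] ->
  connected_in e (closed_comp e S x :\: X).
Proof.
set K := component e S x; set W := closed_comp e S x :\: X => xS dXK.
have sKW : K \subset W.
  by apply/subsetP => a aK; rewrite in_setD in_setU (disjointFl dXK aK) aK.
have cxW u : u \in W -> connect (induced_rel e W) x u.
  move=> uW; move: (uW); rewrite in_setD in_setU => /andP[_ /orP[uK|]].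
    exact/(connect_induced_sub sKW)/connect_component.
  rewrite in_setD inE => /andP[_ /existsP[a /andP[aK eau]]].
  apply: connect_trans (connect_induced_sub sKW (connect_component aK)) _.
  by apply: connect1; rewrite /induced_rel /= (subsetP sKW) ?uW.
have csym := sym_connect_sym (induced_rel_sym W e_sym).
move=> u v uW vW; rewrite /conn_in uW vW /=.
by rewrite -(same_connect csym (cxW u uW)) cxW.
Qed.

Lemma separator_closed_comp_meets_component x (X : {set T}) u v :
  x \notin S -> separator e (closed_comp e S x) X u v ->
  ~~ [disjoint X & component e S x].
Proof.
move=> xS [_ uW vW ncuv]; apply: contraNN ncuv => dXK.
exact: connected_closed_compD xS dXK _ _ uW vW.
Qed.

End Components.

Theorem lemma7 (T : finType) (e : rel T) (e_sym : symmetric e)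
    (e_irr : irreflexive e) (S : {set T}) :
  connected_in e [set: T] ->
  min_separator e [set: T] S ->
  is_clique e S ->
  forall x1 x2 : T, x1 \notin S -> x2 \notin S ->
  closed_comp e S x1 != closed_comp e S x2 ->
  forall X : {set T},
    ~ (min_separator e (closed_comp e S x1) X /\
       min_separator e (closed_comp e S x2) X).
Proof.
move=> _ _ _ x1 x2 x1S _ neq12 X [[u1 [v1 [sep1 _]]] [u2 [v2 [sep2 _]]]].
have /pred0Pn[y /andP[yX yK1]] :=
  separator_closed_comp_meets_component e_sym x1S sep1.
have yd2 : y \in closed_comp e S x2 by case: sep2 => /subsetP/(_ y yX).
move: neq12; rewrite /closed_comp (component_meet_closed_comp e_sym yK1 yd2).
by rewrite eqxx.
Qed.
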